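(* Let $t\geq 1$ and let $C=\{a_1,\ldots,a_m\}$ be a fan grounded by a curve $\gamma=\gamma_1\cup\cdots\cup\gamma_m$. If each $a_i$ intersects $\gamma$ in at most $t$ points, then there is a subfan $C'=\{a_{i_1},\ldots,a_{i_r}\}\subseteq C$ with $i_1<\cdots<i_r$ and $r=\lfloor\log_{t+1}m\rfloor$ that is grounded by a subcurve $\gamma'=\gamma'_1\cup\cdots\cup\gamma'_r\subseteq\gamma$ such that (1) $\gamma'_j\supseteq\gamma_{i_j}$ for $1\leq j\leq r$, and (2) $a_{i_j}$ intersects $\gamma'$ only within $\gamma'_1\cup\cdots\cup\gamma'_j$ for $1\leq j\leq r$.
   Context: All curves are simple; no two curves are tangent (a shared interior point is a proper crossing). A fan with apex $v$ is a collection of curves with common endpoint $v$. Let $\gamma$ be a curve with endpoints $p,q$, partitioned into subcurves $\gamma_1,\ldots,\gamma_m$ appearing in this order along $\gamma$ from $p$ to $q$ (consecutive pieces sharing an endpoint). A fan $C=\{a_1,\ldots,a_m\}$ with apex $v$ is grounded by $\gamma_1\cup\cdots\cup\gamma_m$ if $v\notin\gamma$ and each $a_i$ has its other endpoint on $\gamma_i$. It is well-grounded by $\gamma_1\cup\cdots\cup\gamma_m$ if in addition each $a_i$ intersects $\gamma$ only within $\gamma_i$. *)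

From Stdlib Require Import Reals List.
Open Scope R_scope.

Definition point := (R * R)%type.

Definition continuous_on01 (f : R -> point) : Prop :=
  forall x, 0 <= x <= 1 -> forall eps, eps > 0 ->
    exists delta, delta > 0 /\
      forall y, 0 <= y <= 1 -> Rabs (y - x) < delta ->
        Rabs (fst (f y) - fst (f x)) < eps /\ Rabs (snd (f y) - snd (f x)) < eps.

Definition simple_curve (f : R -> point) : Prop :=
  continuous_on01 f /\
  (forall x y, 0 <= x <= 1 -> 0 <= y <= 1 -> f x = f y -> x = y).

Definition on_arc (f : R -> point) (u w : R) (p : point) : Prop :=
  exists tau, u <= tau <= w /\ f tau = p.

Definition on_curve (f : R -> point) (p : point) : Prop := on_arc f 0 1 p.

From Stdlib Require Import Reals List Lra Lia Classical.
Open Scope R_scope.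

(* Write gamma_i = gamma([s(i-1), s i]).  We build the subfan
   greedily, working inside a block of consecutive pieces gamma_lo, ..., gamma_hi
   containing at least (t+1)^r pieces.  The first chosen curve is a_lo.  Cut the
   next t*N pieces (N = (t+1)^(r-1)) into t blocks of N pieces each.  The curve
   a_lo meets gamma in at most t points, one of which is its endpoint on gamma_lo,
   so by pigeonhole some block carries no point of a_lo.  Recursing in that block
   gives r-1 further curves; the first piece gamma'_1 is stretched from the start
   of gamma_lo to the start of the free block, so a_lo meets the resulting gamma'
   only inside gamma'_1, while the recursive pieces keep their own property. *)

Lemma incr_lt (f : nat -> R) (n : nat) :
  (forall i, (1 <= i <= n)%nat -> f (i - 1)%nat < f i) ->
  forall i j, (i < j)%nat -> (j <= n)%nat -> f i < f j.
Proof.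
  intros Hf i j Hij. induction Hij as [|j Hij IH]; intros Hjn.
  - specialize (Hf (S i) ltac:(lia)). replace (S i - 1)%nat with i in Hf by lia.
    exact Hf.
  - specialize (Hf (S j) ltac:(lia)). replace (S j - 1)%nat with j in Hf by lia.
    specialize (IH ltac:(lia)). lra.
Qed.

Lemma incr_le (f : nat -> R) (n : nat) :
  (forall i, (1 <= i <= n)%nat -> f (i - 1)%nat < f i) ->
  forall i j, (i <= j)%nat -> (j <= n)%nat -> f i <= f j.
Proof.
  intros Hf i j Hij Hjn. destruct (Nat.eq_dec i j) as [<-|Hne]; [lra|].
  left. apply (incr_lt f n Hf); lia.
Qed.

Lemma arc_mono (g : R -> point) (u w u' w' : R) (p : point) :
  u' <= u -> w <= w' -> on_arc g u w p -> on_arc g u' w' p.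
Proof. intros Hu Hw [tau [Htau Hg]]. exists tau. split; [lra|exact Hg]. Qed.

Lemma hits_length (A : Type) (eq_dec : forall x y : A, {x = y} + {x <> y})
  (Q : nat -> A -> Prop) (n : nat) :
  (forall k k' p, (k < n)%nat -> (k' < n)%nat -> Q k p -> Q k' p -> k = k') ->
  forall l : list A, (forall k, (k < n)%nat -> exists p, In p l /\ Q k p) ->
  (n <= length l)%nat.
Proof.
  induction n as [|n IH]; intros Hdisj l Hhit; [lia|].
  destruct (Hhit n ltac:(lia)) as [p [Hpl Hp]].
  (* the families 0..n-1 avoid p, hence still meet l with p removed *)
  assert (Hrest : (n <= length (remove eq_dec p l))%nat).
  { apply IH; [intros k k' q Hk Hk'; apply Hdisj; lia|].
    intros k Hk. destruct (Hhit k ltac:(lia)) as [q [Hql Hq]].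
    exists q. split; [|exact Hq]. apply in_in_remove; [|exact Hql].
    intros ->. assert (k = n) by (apply (Hdisj k n p); auto; lia). lia. }
  pose proof (remove_length_lt eq_dec l p Hpl). lia.
Qed.

Lemma point_eq_dec (p q : point) : {p = q} + {p <> q}.
Proof.
  destruct p as [x y], q as [x' y'].
  destruct (Req_dec_T x x') as [<-|Hx]; [|right; congruence].
  destruct (Req_dec_T y y') as [<-|Hy]; [left; reflexivity|right; congruence].
Qed.

Definition on_arc_oc (g : R -> point) (u w : R) (p : point) : Prop :=
  exists tau, u < tau <= w /\ g tau = p.

Section GroundedFan.

Variables (gamma : R -> point) (s : nat -> R) (a : nat -> R -> point) (t m : nat).

Hypothesis gamma_inj :
  forall x y, 0 <= x <= 1 -> 0 <= y <= 1 -> gamma x = gamma y -> x = y.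
Hypothesis s_start : s 0%nat = 0.
Hypothesis s_end : s m = 1.
Hypothesis s_step : forall i, (1 <= i <= m)%nat -> s (i - 1)%nat < s i.
Hypothesis ends_grounded :
  forall i, (1 <= i <= m)%nat -> on_arc gamma (s (i - 1)%nat) (s i) (a i 1).
Hypothesis few_crossings :
  forall i, (1 <= i <= m)%nat ->
    exists l : list point, (length l <= t)%nat /\
      forall p, on_curve (a i) p -> on_curve gamma p -> In p l.

Lemma s_le (i j : nat) : (i <= j)%nat -> (j <= m)%nat -> s i <= s j.
Proof. exact (incr_le s m s_step i j). Qed.

Lemma s_range (i : nat) : (i <= m)%nat -> 0 <= s i <= 1.
Proof. intros Hi. rewrite <- s_start, <- s_end. split; apply s_le; lia. Qed.

(* Some block of N consecutive pieces among the t blocks following gamma_lo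
   contains no point of a_lo: a_lo already spends one of its at most t crossings
   at its endpoint on gamma_lo, and distinct blocks have disjoint points. *)
Lemma free_block (lo N : nat) :
  (1 <= lo)%nat -> (lo + t * N <= m)%nat ->
  exists K, (K < t)%nat /\ forall p, on_curve (a lo) p ->
    ~ on_arc_oc gamma (s (lo + K * N)%nat) (s (lo + K * N + N)%nat) p.
Proof.
  intros Hlo Hfit.
  destruct (few_crossings lo ltac:(lia)) as [l [Hlen Hl]].
  destruct (ends_grounded lo ltac:(lia)) as [tau0 [Htau0 Hg0]].
  set (Q := fun K p => on_curve (a lo) p /\
              on_arc_oc gamma (s (lo + K * N)%nat) (s (lo + K * N + N)%nat) p).
  assert (block_range : forall K, (K < t)%nat ->
            0 <= s (lo + K * N)%nat /\ s (lo + K * N + N)%nat <= 1).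
  { intros K HK. split; apply s_range; nia. }
  apply NNPP. intros Hnone.
  assert (Hhit : forall K, (K < t)%nat -> exists p,
            In p (remove point_eq_dec (a lo 1) l) /\ Q K p).
  { intros K HK. apply NNPP. intros Hno. apply Hnone. exists K. split; [exact HK|].
    intros p Hpa Hp. apply Hno. exists p. split; [|split; assumption].
    destruct Hp as [tau [Htau Hg]]. destruct (block_range K HK).
    apply in_in_remove.
    - (* p is not the endpoint of a_lo, which lies on gamma_lo before the block *)
      intros Heq. rewrite <- Hg0 in Heq.
      assert (0 <= s (lo - 1)%nat) by (apply s_range; lia).
      assert (s lo <= s (lo + K * N)%nat) by (apply s_le; nia).
      assert (tau = tau0) by (apply gamma_inj; [lra|lra|congruence]). lra.
    - apply Hl; [exact Hpa|]. exists tau. split; [lra|exact Hg]. }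
  assert (Hdisj : forall K K' p, (K < t)%nat -> (K' < t)%nat ->
            Q K p -> Q K' p -> K = K').
  { intros K K' p HK HK' [_ [tau [Htau Hg]]] [_ [tau' [Htau' Hg']]].
    destruct (block_range K HK), (block_range K' HK').
    assert (tau = tau') by (apply gamma_inj; [lra|lra|congruence]). subst tau'.
    destruct (Nat.lt_total K K') as [Hlt|[Heq|Hlt]]; [exfalso|exact Heq|exfalso].
    - assert (s (lo + K * N + N)%nat <= s (lo + K' * N)%nat) by (apply s_le; nia). lra.
    - assert (s (lo + K' * N + N)%nat <= s (lo + K * N)%nat) by (apply s_le; nia). lra. }
  assert (Hin : In (a lo 1) l).
  { apply Hl; [exists 1; split; [lra|reflexivity]|].
    exists tau0. split; [|exact Hg0].
    assert (0 <= s (lo - 1)%nat) by (apply s_range; lia).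
    assert (s lo <= 1) by (apply s_range; lia). lra. }
  pose proof (hits_length point point_eq_dec Q t Hdisj _ Hhit).
  pose proof (remove_length_lt point_eq_dec l (a lo 1) Hin). lia.
Qed.

(* The invariant of the construction inside the block of pieces lo..hi: r curves
   a_(idx 1) < ... < a_(idx r) from the block, grounded by the pieces
   gamma([u (j-1), u j]), where gamma' starts at the start of gamma_lo and ends
   inside the block, the j-th piece contains gamma_(idx j), and a_(idx j) meets
   gamma' only within its first j pieces. *)
Record nested_subfan (r lo hi : nat) (idx : nat -> nat) (u : nat -> R) : Prop := {
  ns_start : u 0%nat = s (lo - 1)%nat;
  ns_end : u r <= s hi;
  ns_idx_range : forall j, (1 <= j <= r)%nat -> (lo <= idx j <= hi)%nat;
  ns_idx_incr : forall j, (1 <= j < r)%nat -> (idx j < idx (j + 1))%nat;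
  ns_breaks_incr : forall j, (1 <= j <= r)%nat -> u (j - 1)%nat < u j;
  ns_contains : forall j, (1 <= j <= r)%nat ->
    u (j - 1)%nat <= s (idx j - 1)%nat /\ s (idx j) <= u j;
  ns_prefix : forall j, (1 <= j <= r)%nat -> forall p,
    on_curve (a (idx j)) p -> on_arc gamma (u 0%nat) (u r) p ->
    on_arc gamma (u 0%nat) (u j) p
}.

Lemma extend_subfan (r lo b c hi : nat) (idx : nat -> nat) (u : nat -> R) :
  (1 <= lo)%nat -> (lo <= b < c)%nat -> (c <= hi)%nat -> (hi <= m)%nat ->
  (forall p, on_curve (a lo) p -> ~ on_arc_oc gamma (s b) (s c) p) ->
  nested_subfan r (b + 1) c idx u ->
  nested_subfan (S r) lo hi
    (fun j => match j with 0 | 1 => lo | S j' => idx j' end)%nat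
    (fun j => match j with 0 => s (lo - 1)%nat | S j' => u j' end).
Proof.
  intros Hlo Hlob Hchi Hhim Hfree [Hstart Hend Hrange Hincr Hbreaks Hcont Hprefix].
  replace (b + 1 - 1)%nat with b in Hstart by lia.
  assert (u_le : forall i j, (i <= j)%nat -> (j <= r)%nat -> u i <= u j)
    by exact (incr_le u r Hbreaks).
  split.
  - reflexivity.
  - assert (s c <= s hi) by (apply s_le; lia). simpl. lra.
  - intros [|[|j]] Hj; [lia|lia|]. specialize (Hrange (S j) ltac:(lia)). lia.
  - intros [|[|j]] Hj; [lia| |].
    + specialize (Hrange 1%nat ltac:(lia)). simpl. lia.
    + specialize (Hincr (S j) ltac:(lia)).
      replace (S (S j) + 1)%nat with (S (S (j + 1))) by lia.
      replace (S j + 1)%nat with (S (j + 1)) in Hincr by lia. exact Hincr.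
  - intros [|[|j]] Hj; [lia| |].
    + simpl. rewrite Hstart. apply (incr_lt s m s_step); lia.
    + specialize (Hbreaks (S j) ltac:(lia)).
      replace (S j - 1)%nat with j in Hbreaks by lia.
      replace (S (S j) - 1)%nat with (S j) by lia. exact Hbreaks.
  - intros [|[|j]] Hj; [lia| |].
    + simpl. rewrite Hstart. split; [lra|apply s_le; lia].
    + specialize (Hcont (S j) ltac:(lia)).
      replace (S j - 1)%nat with j in Hcont by lia.
      replace (S (S j) - 1)%nat with (S j) by lia. exact Hcont.
  - intros [|[|j]] Hj p Hpa [tau [Htau Hg]]; [lia| |]; simpl in *.
    + (* a_lo avoids gamma((s b, u r]), so it meets gamma' within gamma'_1 *)
      destruct (Rle_dec tau (u 0%nat)) as [Hle|Hgt].
      * exists tau. split; [lra|exact Hg].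
      * exfalso. apply (Hfree p Hpa). exists tau. split; [|exact Hg]. lra.
    + destruct (Rle_dec tau (u 0%nat)) as [Hle|Hgt].
      * assert (u 0%nat <= u (S j)) by (apply u_le; lia).
        exists tau. split; [lra|exact Hg].
      * assert (s (lo - 1)%nat <= u 0%nat) by (rewrite Hstart; apply s_le; lia).
        apply arc_mono with (u 0%nat) (u (S j)); [lra|lra|].
        apply (Hprefix (S j) ltac:(lia) p Hpa). exists tau. split; [lra|exact Hg].
Qed.

Lemma nested_subfan_exists (r : nat) : forall lo hi,
  (1 <= lo)%nat -> (hi <= m)%nat -> (lo + (t + 1) ^ r <= hi + 1)%nat ->
  exists idx u, nested_subfan r lo hi idx u.
Proof.
  induction r as [|r IH]; intros lo hi Hlo Hhi Hsize.
  - exists (fun _ => lo), (fun _ => s (lo - 1)%nat).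
    split; intros; try lia; try reflexivity.
    apply s_le; simpl in Hsize; lia.
  - set (N := ((t + 1) ^ r)%nat) in *.
    rewrite Nat.pow_succ_r' in Hsize. fold N in Hsize.
    assert (HN : N <> 0%nat) by (apply Nat.pow_nonzero; lia).
    destruct (free_block lo N Hlo ltac:(nia)) as [K [HK Hfree]].
    destruct (IH (lo + K * N + 1)%nat (lo + K * N + N)%nat ltac:(lia) ltac:(nia)
                 ltac:(lia)) as [idx [u Hsub]].
    eexists; eexists.
    apply (extend_subfan r lo (lo + K * N) (lo + K * N + N) hi idx u);
      [lia|lia|nia|lia|exact Hfree|exact Hsub].
Qed.

End GroundedFan.

Theorem mainTheorem5
  (t m : nat) (gamma : R -> point) (s : nat -> R) (v : point)
  (a : nat -> R -> point) :
  (1 <= t)%nat ->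
  (1 <= m)%nat ->
  simple_curve gamma ->
  (* gamma = gamma_1 u ... u gamma_m, gamma_i = gamma([s (i-1), s i]) *)
  s 0%nat = 0 -> s m = 1 ->
  (forall i, (1 <= i <= m)%nat -> s (i - 1)%nat < s i) ->
  (* C = {a_1,...,a_m} is a fan with apex v = a_i 0 *)
  (forall i, (1 <= i <= m)%nat -> simple_curve (a i) /\ a i 0 = v) ->
  (* grounded by gamma_1 u ... u gamma_m *)
  ~ on_curve gamma v ->
  (forall i, (1 <= i <= m)%nat -> on_arc gamma (s (i - 1)%nat) (s i) (a i 1)) ->
  (* each a_i meets gamma in at most t points *)
  (forall i, (1 <= i <= m)%nat ->
     exists l : list point, (length l <= t)%nat /\
       forall p, on_curve (a i) p -> on_curve gamma p -> In p l) ->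
  (* r = floor(log_{t+1} m) *)
  forall r : nat, ((t + 1) ^ r <= m < (t + 1) ^ (r + 1))%nat ->
  exists (idx : nat -> nat) (u : nat -> R),
    (* subfan C' = {a_{idx 1}, ..., a_{idx r}}, idx 1 < ... < idx r *)
    (forall j, (1 <= j <= r)%nat -> (1 <= idx j <= m)%nat) /\
    (forall j, (1 <= j < r)%nat -> (idx j < idx (j + 1))%nat) /\
    (* gamma' = gamma([u 0, u r]) subset gamma, gamma'_j = gamma([u (j-1), u j]) *)
    0 <= u 0%nat /\ u r <= 1 /\
    (forall j, (1 <= j <= r)%nat -> u (j - 1)%nat < u j) /\
    (* C' grounded by gamma'_1 u ... u gamma'_r *)
    ~ on_arc gamma (u 0%nat) (u r) v /\
    (forall j, (1 <= j <= r)%nat ->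
       on_arc gamma (u (j - 1)%nat) (u j) (a (idx j) 1)) /\
    (* (1) gamma'_j contains gamma_{i_j} *)
    (forall j, (1 <= j <= r)%nat -> forall p,
       on_arc gamma (s (idx j - 1)%nat) (s (idx j)) p ->
       on_arc gamma (u (j - 1)%nat) (u j) p) /\
    (* (2) a_{i_j} meets gamma' only within gamma'_1 u ... u gamma'_j *)
    (forall j, (1 <= j <= r)%nat -> forall p,
       on_curve (a (idx j)) p -> on_arc gamma (u 0%nat) (u r) p ->
       on_arc gamma (u 0%nat) (u j) p).
Proof.
  intros _ Hm [_ Hinj] Hs0 Hsm Hs _ Hv Hend Hl r Hr.
  destruct (nested_subfan_exists gamma s a t m Hinj Hs0 Hsm Hs Hend Hl r 1 m
              ltac:(lia) ltac:(lia) ltac:(lia))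
    as [idx [u [Hstart Hfin Hrange Hincr Hbreaks Hcont Hprefix]]].
  simpl in Hstart. rewrite Hs0 in Hstart. rewrite Hsm in Hfin.
  exists idx, u.
  split; [intros j Hj; specialize (Hrange j Hj); lia|].
  split; [exact Hincr|].
  split; [lra|]. split; [lra|]. split; [exact Hbreaks|].
  split.
  { intros Hon. apply Hv. apply arc_mono with (u 0%nat) (u r); [lra|lra|exact Hon]. }
  split.
  { intros j Hj. destruct (Hcont j Hj). specialize (Hrange j Hj).
    apply arc_mono with (s (idx j - 1)%nat) (s (idx j)); [lra|lra|].
    apply Hend. lia. }
  split.
  { intros j Hj p Hp. destruct (Hcont j Hj).
    apply arc_mono with (s (idx j - 1)%nat) (s (idx j)); [lra|lra|exact Hp]. }
  exact Hprefix.
Qed.
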